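(* Let $\varphi$ be a modal formula, let $\mathrm{Sub}(\varphi)$ be its set of subformulas, and let $q$ be a propositional variable not occurring in $\varphi$. Put $q^1=q$, $q^0=\neg q$, and $$X=\{\Box(q^e\to\psi)\to\psi:\ e\in\{0,1\},\ \Box\psi\in\mathrm{Sub}(\varphi)\}.$$ Let $X^{\boxdot}=\{\xi^{\boxdot}:\xi\in X\}$. Then: (i) $X^{\boxdot}\vdash_{\mathbf K}\Box\psi^{\boxdot}\to\psi^{\boxdot}$ for every $\Box\psi\in\mathrm{Sub}(\varphi)$; this derivation does not even need necessitation. (ii) $X^{\boxdot}\vdash_{\mathbf K}\psi\leftrightarrow\psi^{\boxdot}$ for every $\psi\in\mathrm{Sub}(\varphi)$.
   Context: $\mathbf K$ is the smallest normal modal logic. The boxdot translation $\varphi\mapsto\varphi^{\boxdot}$ fixes variables, commutes with Boolean connectives, and satisfies $(\Box\varphi)^{\boxdot}=\varphi^{\boxdot}\wedge\Box\varphi^{\boxdot}$. For a normal modal logic $L$, a set of formulas $Y$ and a formula $\theta$, $Y\vdash_L\theta$ (global consequence) means that $\theta$ has a finite derivation from elements of $Y$ and theorems of $L$ using modus ponens and necessitation. *)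

Inductive form : Type :=
| Var : nat -> form
| Bot : form
| Imp : form -> form -> form
| Box : form -> form.

Definition Neg (a : form) : form := Imp a Bot.
Definition Top : form := Imp Bot Bot.
Definition Or (a b : form) : form := Imp (Neg a) b.
Definition And (a b : form) : form := Neg (Imp a (Neg b)).
Definition Iff (a b : form) : form := And (Imp a b) (Imp b a).

Inductive Kthm : form -> Prop :=
| K_ax1 a b : Kthm (Imp a (Imp b a))
| K_ax2 a b c : Kthm (Imp (Imp a (Imp b c)) (Imp (Imp a b) (Imp a c)))
| K_ax3 a : Kthm (Imp (Neg (Neg a)) a)
| K_axK a b : Kthm (Imp (Box (Imp a b)) (Imp (Box a) (Box b)))
| K_mp a b : Kthm (Imp a b) -> Kthm a -> Kthm b
| K_nec a : Kthm a -> Kthm (Box a).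

(* The flag [nec] says whether the
   necessitation rule may be applied (to derived formulas);
   [gderiv true] is the global consequence of the paper, [gderiv false]
   is derivability using modus ponens only. *)
Inductive gderiv (nec : bool) (Y : form -> Prop) : form -> Prop :=
| gd_hyp a : Y a -> gderiv nec Y a
| gd_thm a : Kthm a -> gderiv nec Y a
| gd_mp a b : gderiv nec Y (Imp a b) -> gderiv nec Y a -> gderiv nec Y b
| gd_nec a : nec = true -> gderiv nec Y a -> gderiv nec Y (Box a).

Fixpoint boxdot (f : form) : form :=
  match f with
  | Var n => Var n
  | Bot => Bot
  | Imp a b => Imp (boxdot a) (boxdot b)
  | Box a => And (boxdot a) (Box (boxdot a))
  end.

(* Subformula relation: [subf psi phi] means psi ∈ Sub(phi). *)
Inductive subf : form -> form -> Prop :=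
| sub_refl a : subf a a
| sub_impl a b c : subf c a -> subf c (Imp a b)
| sub_impr a b c : subf c b -> subf c (Imp a b)
| sub_box a c : subf c a -> subf c (Box a).

Fixpoint occurs (q : nat) (f : form) : Prop :=
  match f with
  | Var n => n = q
  | Bot => False
  | Imp a b => occurs q a \/ occurs q b
  | Box a => occurs q a
  end.

Definition qe (q : nat) (e : bool) : form := if e then Var q else Neg (Var q).

Definition Xset (phi : form) (q : nat) (xi : form) : Prop :=
  exists (e : bool) (psi : form),
    subf (Box psi) phi /\ xi = Imp (Box (Imp (qe q e) psi)) psi.

Definition Xbd (phi : form) (q : nat) (th : form) : Prop :=
  exists xi, Xset phi q xi /\ th = boxdot xi.


(* Proof idea.
   (i) Write p for psi^boxdot.  Modulo boxdot, the two members of X for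
   Box psi read  ((a -> p) /\ Box (a -> p)) -> p  with a = q and a = ~q.
   If Box p holds, then Box (a -> p) holds for either a, and a -> p holds
   for whichever of q, ~q fails once p is assumed false; so one of the two
   hypotheses yields p.  This is pure propositional reasoning plus the
   K-theorem Box p -> Box (a -> p): no necessitation is used.
   (ii) Induction on psi.  For Box psi the induction hypothesis gives
   Box psi <-> Box p (necessitation and the K axiom), and (i) gives
   Box p -> p, whence Box p <-> p /\ Box p = (Box psi)^boxdot.
   Propositional steps are carried out in the necessitation-free calculus,
   where the deduction theorem holds; the resulting K-theorems are then
   applied inside derivations that may use necessitation. *)

Notation D := (gderiv false).

Definition ext (Y : form -> Prop) (a : form) : form -> Prop :=
  fun x => Y x \/ x = a.

Definition empty : form -> Prop := fun _ => False.

Lemma gderiv_mono n (Y Z : form -> Prop) a :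
  (forall x, Y x -> Z x) -> gderiv n Y a -> gderiv n Z a.
Proof.
  intros HYZ H; induction H.
  - apply gd_hyp; auto.
  - now apply gd_thm.
  - eapply gd_mp; eauto.
  - apply gd_nec; auto.
Qed.

Lemma gderiv_nec_free n Y a : D Y a -> gderiv n Y a.
Proof.
  intro H; induction H.
  - now apply gd_hyp.
  - now apply gd_thm.
  - eapply gd_mp; eauto.
  - discriminate.
Qed.

Lemma gderiv_empty_Kthm a : D empty a -> Kthm a.
Proof.
  intro H; induction H.
  - destruct H.
  - assumption.
  - eapply K_mp; eauto.
  - discriminate.
Qed.

Lemma gderiv_lift n Y a b : Kthm (Imp a b) -> gderiv n Y a -> gderiv n Y b.
Proof. intros Hab Ha. eapply gd_mp; [apply gd_thm, Hab | exact Ha]. Qed.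

Lemma gderiv_lift2 n Y a b c :
  Kthm (Imp a (Imp b c)) -> gderiv n Y a -> gderiv n Y b -> gderiv n Y c.
Proof. intros Habc Ha Hb. eapply gd_mp; [eapply gderiv_lift; eassumption | exact Hb]. Qed.

Lemma K_id a : Kthm (Imp a a).
Proof.
  eapply K_mp; [eapply K_mp; [apply (K_ax2 a (Imp a a) a) | apply K_ax1] | apply K_ax1].
Qed.

(* The deduction theorem; it fails in the presence of necessitation. *)
Lemma deduction Y a b : D (ext Y a) b -> D Y (Imp a b).
Proof.
  intro H; induction H.
  - destruct H as [H | ->].
    + eapply gd_mp; [apply gd_thm, K_ax1 | now apply gd_hyp].
    + apply gd_thm, K_id.
  - eapply gd_mp; [apply gd_thm, K_ax1 | now apply gd_thm].
  - eapply gd_mp; [eapply gd_mp; [apply gd_thm, K_ax2 | eassumption] | eassumption].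
  - discriminate.
Qed.

Lemma nd_assume Y a : D (ext Y a) a.
Proof. apply gd_hyp. now right. Qed.

Lemma nd_weaken Y a b : D Y b -> D (ext Y a) b.
Proof. apply gderiv_mono. intros; now left. Qed.

Lemma nd_efq Y a : D Y Bot -> D Y a.
Proof.
  intro H. eapply gd_mp; [apply gd_thm, (K_ax3 a) |].
  eapply gd_mp; [apply gd_thm, (K_ax1 Bot (Neg a)) | exact H].
Qed.

Lemma nd_raa Y a : D (ext Y (Neg a)) Bot -> D Y a.
Proof. intro H. eapply gd_mp; [apply gd_thm, (K_ax3 a) | now apply deduction]. Qed.

Lemma nd_and_intro Y a b : D Y a -> D Y b -> D Y (And a b).
Proof.
  intros Ha Hb. apply deduction.
  eapply gd_mp; [eapply gd_mp; [apply nd_assume | apply nd_weaken, Ha] | apply nd_weaken, Hb].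
Qed.

Lemma nd_and_elim1 Y a b : D Y (And a b) -> D Y a.
Proof.
  intro H. apply nd_raa. eapply gd_mp; [apply nd_weaken, H |].
  apply deduction, nd_efq.
  eapply gd_mp; [apply nd_weaken, nd_assume | apply nd_assume].
Qed.

Lemma nd_and_elim2 Y a b : D Y (And a b) -> D Y b.
Proof.
  intro H. apply nd_raa. eapply gd_mp; [apply nd_weaken, H |].
  apply deduction, nd_weaken, nd_assume.
Qed.

Lemma K_box_weaken a b : Kthm (Imp (Box b) (Box (Imp a b))).
Proof. eapply K_mp; [apply K_axK | apply K_nec, K_ax1]. Qed.

Lemma K_and_intro a b : Kthm (Imp a (Imp b (And a b))).
Proof.
  apply gderiv_empty_Kthm, deduction, deduction.
  apply nd_and_intro; [apply nd_weaken |]; apply nd_assume.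
Qed.

Lemma K_and_elim1 a b : Kthm (Imp (And a b) a).
Proof. apply gderiv_empty_Kthm, deduction. eapply nd_and_elim1, nd_assume. Qed.

Lemma K_and_elim2 a b : Kthm (Imp (And a b) b).
Proof. apply gderiv_empty_Kthm, deduction. eapply nd_and_elim2, nd_assume. Qed.

Lemma K_iff_refl a : Kthm (Iff a a).
Proof. eapply K_mp; [eapply K_mp; [apply K_and_intro |] |]; apply K_id. Qed.

Lemma K_iff_trans a b c : Kthm (Imp (Iff a b) (Imp (Iff b c) (Iff a c))).
Proof.
  apply gderiv_empty_Kthm, deduction, deduction. apply nd_and_intro.
  - apply deduction. eapply gd_mp; [eapply nd_and_elim1, nd_weaken, nd_assume |].
    eapply gd_mp; [eapply nd_and_elim1, nd_weaken, nd_weaken, nd_assume | apply nd_assume].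
  - apply deduction. eapply gd_mp; [eapply nd_and_elim2, nd_weaken, nd_weaken, nd_assume |].
    eapply gd_mp; [eapply nd_and_elim2, nd_weaken, nd_assume | apply nd_assume].
Qed.

Lemma K_iff_imp a a' b b' :
  Kthm (Imp (Iff a a') (Imp (Iff b b') (Iff (Imp a b) (Imp a' b')))).
Proof.
  apply gderiv_empty_Kthm, deduction, deduction. apply nd_and_intro.
  - apply deduction, deduction.
    eapply gd_mp; [eapply nd_and_elim1, nd_weaken, nd_weaken, nd_assume |].
    eapply gd_mp; [apply nd_weaken, nd_assume |].
    eapply gd_mp; [eapply nd_and_elim2, nd_weaken, nd_weaken, nd_weaken, nd_assume |].
    apply nd_assume.
  - apply deduction, deduction.
    eapply gd_mp; [eapply nd_and_elim2, nd_weaken, nd_weaken, nd_assume |].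
    eapply gd_mp; [apply nd_weaken, nd_assume |].
    eapply gd_mp; [eapply nd_and_elim1, nd_weaken, nd_weaken, nd_weaken, nd_assume |].
    apply nd_assume.
Qed.

Lemma K_absorb b c : Kthm (Imp (Imp b c) (Iff b (And c b))).
Proof.
  apply gderiv_empty_Kthm, deduction. apply nd_and_intro.
  - apply deduction. apply nd_and_intro; [| apply nd_assume].
    eapply gd_mp; [apply nd_weaken, nd_assume | apply nd_assume].
  - apply deduction. eapply nd_and_elim2, nd_assume.
Qed.

(* The key tautology behind (i): a case split on a, carried by the two
   boxed hypotheses, turns Box b into b. *)
Lemma K_case_split_reflexivity a b :
  Kthm (Imp (Imp (And (Imp a b) (Box (Imp a b))) b)
       (Imp (Imp (And (Imp (Neg a) b) (Box (Imp (Neg a) b))) b)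
       (Imp (Box b) b))).
Proof.
  apply gderiv_empty_Kthm, deduction, deduction, deduction, nd_raa.
  (* Context: hyp_pos, hyp_neg, Box b, ~ b. *)
  assert (not_a : D (ext (ext (ext (ext empty
                    (Imp (And (Imp a b) (Box (Imp a b))) b))
                    (Imp (And (Imp (Neg a) b) (Box (Imp (Neg a) b))) b))
                    (Box b)) (Neg b)) (Neg a)).
  { apply deduction. eapply gd_mp; [apply nd_weaken, nd_assume |].
    eapply gd_mp; [do 3 apply nd_weaken; apply nd_assume |].
    apply nd_and_intro.
    - apply deduction, nd_efq.
      eapply gd_mp; [apply nd_assume | apply nd_weaken, nd_assume].
    - eapply gderiv_lift; [apply K_box_weaken | do 2 apply nd_weaken; apply nd_assume]. }
  eapply gd_mp; [apply nd_assume |].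
  eapply gd_mp; [do 3 apply nd_weaken; apply nd_assume |].
  apply nd_and_intro.
  - apply deduction, nd_efq.
    eapply gd_mp; [apply nd_weaken, not_a | apply nd_assume].
  - eapply gderiv_lift; [apply K_box_weaken | apply nd_weaken, nd_assume].
Qed.

Lemma gderiv_box_congr Y a b :
  gderiv true Y (Iff a b) -> gderiv true Y (Iff (Box a) (Box b)).
Proof.
  intro Hab.
  assert (box_imp : forall c d, gderiv true Y (Imp c d) ->
                      gderiv true Y (Imp (Box c) (Box d))).
  { intros c d Hcd. eapply gderiv_lift; [apply K_axK | now apply gd_nec]. }
  eapply gderiv_lift2; [apply K_and_intro | |]; apply box_imp.
  - eapply gderiv_lift; [apply K_and_elim1 | exact Hab].
  - eapply gderiv_lift; [apply K_and_elim2 | exact Hab].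
Qed.

Lemma subf_trans c a phi : subf c a -> subf a phi -> subf c phi.
Proof.
  intros H1 H2; induction H2; auto.
  - apply sub_impl; auto.
  - apply sub_impr; auto.
  - apply sub_box; auto.
Qed.

Lemma Xbd_instance phi q psi e :
  subf (Box psi) phi -> Xbd phi q (boxdot (Imp (Box (Imp (qe q e) psi)) psi)).
Proof. intro Hs. exists (Imp (Box (Imp (qe q e) psi)) psi). split; [exists e, psi |]; auto. Qed.

Lemma boxdot_reflexivity phi q psi :
  subf (Box psi) phi -> D (Xbd phi q) (Imp (Box (boxdot psi)) (boxdot psi)).
Proof.
  intro Hs.
  pose proof (gd_hyp false _ _ (Xbd_instance phi q psi true Hs)) as pos.
  pose proof (gd_hyp false _ _ (Xbd_instance phi q psi false Hs)) as neg.
  exact (gderiv_lift2 _ _ _ _ _ (K_case_split_reflexivity (Var q) (boxdot psi)) pos neg).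
Qed.

Lemma boxdot_equivalence phi q psi :
  subf psi phi -> gderiv true (Xbd phi q) (Iff psi (boxdot psi)).
Proof.
  induction psi as [n | | a IHa b IHb | a IHa]; intro Hs; simpl.
  - apply gd_thm, K_iff_refl.
  - apply gd_thm, K_iff_refl.
  - eapply gderiv_lift2; [apply K_iff_imp | |].
    + apply IHa. eapply subf_trans; [apply sub_impl, sub_refl | exact Hs].
    + apply IHb. eapply subf_trans; [apply sub_impr, sub_refl | exact Hs].
  - assert (box_congr : gderiv true (Xbd phi q) (Iff (Box a) (Box (boxdot a)))).
    { apply gderiv_box_congr, IHa.
      eapply subf_trans; [apply sub_box, sub_refl | exact Hs]. }
    assert (absorb : gderiv true (Xbd phi q)
                       (Iff (Box (boxdot a)) (And (boxdot a) (Box (boxdot a))))).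
    { eapply gderiv_lift; [apply K_absorb |].
      apply gderiv_nec_free, boxdot_reflexivity, Hs. }
    eapply gderiv_lift2; [apply K_iff_trans | exact box_congr | exact absorb].
Qed.

Theorem claim1 (phi : form) (q : nat) :
  ~ occurs q phi ->
  (forall psi, subf (Box psi) phi ->
     gderiv false (Xbd phi q) (Imp (Box (boxdot psi)) (boxdot psi))) /\
  (forall psi, subf psi phi ->
     gderiv true (Xbd phi q) (Iff psi (boxdot psi))).
Proof.
  intros _. split.
  - intros psi. apply boxdot_reflexivity.
  - intros psi. apply boxdot_equivalence.
Qed.
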